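(* Let $G=(V,E)$ be a $2$-vertex-twinless-connected directed graph. Consider the following algorithm. (1) Compute a minimal $2$-vertex-connected spanning subgraph $G_{2v}=(V,E_{2v})$ of $G$ (i.e. $E_{2v}\subseteq E$, $(V,E_{2v})$ is $2$-vertex-connected, and removing any edge of $E_{2v}$ destroys $2$-vertex-connectivity). (2) Set $E_{2t}\leftarrow E_{2v}$ and $G_{2t}=(V,E_{2t})$. (3) Compute the twinless articulation points of $G_{2v}$. (4) For each twinless articulation point $x$ of $G_{2v}$: while $G_{2t}\setminus\{x\}$ (the graph obtained from the current $G_{2t}$ by deleting $x$) is not twinless strongly connected, compute the twinless strongly connected components of $G_{2t}\setminus\{x\}$, find an edge $(v,w)\in E\setminus E_{2t}$ such that $v,w$ lie in distinct twinless strongly connected components of $G_{2t}\setminus\{x\}$, and add $(v,w)$ to $E_{2t}$. Then the output graph $G_{2t}=(V,E_{2t})$ is $2$-vertex-twinless-connected.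
   Context: Directed graphs are finite. A directed graph is strongly connected if for all vertices $u,w$ there is a directed path from $u$ to $w$. A vertex of a strongly connected graph is a strong articulation point if its deletion leaves a graph that is not strongly connected. A directed graph is $2$-vertex-connected if it is strongly connected, has at least $3$ vertices and has no strong articulation points. Vertices $a,b$ are twinless strongly connected if there exist a directed path $p$ from $a$ to $b$ and a directed path $q$ from $b$ to $a$ such that for every edge $(x,y)$ of $p$, the edge $(y,x)$ is not in $q$; this is an equivalence relation whose classes are the twinless strongly connected components. A graph is twinless strongly connected if it has exactly one twinless strongly connected component. A vertex $v$ of a twinless strongly connected graph $H$ is a twinless articulation point if $H$ minus $v$ is not twinless strongly connected. A directed graph $H=(V,F)$ is $2$-vertex-twinless-connected if it is twinless strongly connected, $|V|\geq 3$, and it has no twinless articulation points. *)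

(* A directed graph is a pair (V, E) with V : {set T} for a
   finType T and E : {set T * T}; an edge (x,y) is usable only when both
   endpoints lie in V (so deleting a vertex x is just V :\ x). *)
From mathcomp Require Import all_boot.
Set Implicit Arguments. Unset Strict Implicit. Unset Printing Implicit Defensive.

Section Digraph.
Variable T : finType.
Implicit Types (V : {set T}) (E F : {set T * T}).

Definition adj V E : rel T := fun x y => [&& x \in V, y \in V & (x, y) \in E].

Definition is_dpath V E (a b : T) (p : seq T) : Prop :=
  a \in V /\ path (adj V E) a p /\ last a p = b.

Definition dpath_edges (a : T) (p : seq T) : seq (T * T) := zip (a :: p) p.

Definition strongly_connected V E : Prop :=
  forall u w, u \in V -> w \in V -> exists p, is_dpath V E u w p.

Definition strong_articulation_point V E (v : T) : Prop :=
  v \in V /\ ~ strongly_connected (V :\ v) E.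

Definition two_vertex_connected V E : Prop :=
  [/\ strongly_connected V E, 3 <= #|V| &
      forall v, ~ strong_articulation_point V E v].

Definition twinless_rel V E (a b : T) : Prop :=
  exists p q, [/\ is_dpath V E a b p, is_dpath V E b a q &
    forall e, e \in dpath_edges a p -> (e.2, e.1) \notin dpath_edges b q].

(* exactly one twinless strongly connected component (an equivalence class of
   twinless_rel on V): V is nonempty and all its vertices are related. *)
Definition twinless_strongly_connected V E : Prop :=
  (exists a, a \in V) /\ forall a b, a \in V -> b \in V -> twinless_rel V E a b.

Definition twinless_articulation_point V E (v : T) : Prop :=
  v \in V /\ ~ twinless_strongly_connected (V :\ v) E.

Definition two_vertex_twinless_connected V E : Prop :=
  [/\ twinless_strongly_connected V E, 3 <= #|V| &
      forall v, ~ twinless_articulation_point V E v].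

Definition minimal_2vc_spanning V E (E2v : {set T * T}) : Prop :=
  [/\ E2v \subset E, two_vertex_connected V E2v &
      forall e, e \in E2v -> ~ two_vertex_connected V (E2v :\ e)].

(* step (4), inner while loop for a fixed twinless articulation point x:
   while_loop V E x F F' means that the loop started with current edge set F
   can terminate with edge set F' (choices of edges are nondeterministic). *)
Inductive while_loop V E (x : T) : {set T * T} -> {set T * T} -> Prop :=
| wl_done F : twinless_strongly_connected (V :\ x) F -> while_loop V E x F F
| wl_step F v w F' :
    ~ twinless_strongly_connected (V :\ x) F ->
    (v, w) \in E :\: F ->
    v \in V :\ x -> w \in V :\ x ->
    ~ twinless_rel (V :\ x) F v w ->
    while_loop V E x ((v, w) |: F) F' ->
    while_loop V E x F F'.

Inductive for_loop V E : seq T -> {set T * T} -> {set T * T} -> Prop :=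
| fl_nil F : for_loop V E [::] F F
| fl_cons x xs F F1 F2 :
    while_loop V E x F F1 -> for_loop V E xs F1 F2 -> for_loop V E (x :: xs) F F2.

Definition algorithm_run V E (E2t : {set T * T}) : Prop :=
  exists E2v xs,
    [/\ minimal_2vc_spanning V E E2v,
        uniq xs,
        (forall x, x \in xs <-> twinless_articulation_point V E2v x) &
        for_loop V E xs E2v E2t].

End Digraph.

(* Every edge the algorithm adds only enlarges the current graph, and twinless
   strong connectivity is monotone in the edge set.  Hence in the output G2t,
   deleting any vertex x leaves a twinless strongly connected graph: if x is a
   twinless articulation point of G2v, the while loop for x stopped exactly when
   this held; otherwise it already held in G2v.  Since |V| >= 3, any two vertices
   avoid some third vertex x, so they are twinless strongly connected already in
   G2t minus x, hence in G2t. *)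
From mathcomp Require Import all_boot.
From Stdlib Require Classical.
Set Implicit Arguments. Unset Strict Implicit. Unset Printing Implicit Defensive.

Section TwinlessConnectivity.
Variable T : finType.
Implicit Types (V : {set T}) (E F : {set T * T}).

Lemma adjS V V' E E' : V \subset V' -> E \subset E' -> subrel (adj V E) (adj V' E').
Proof.
move=> sVV' sEE' x y /and3P[xV yV xyE].
by apply/and3P; split; [exact: (subsetP sVV') | exact: (subsetP sVV') | exact: (subsetP sEE')].
Qed.

Lemma is_dpathS V V' E E' a b p :
  V \subset V' -> E \subset E' -> is_dpath V E a b p -> is_dpath V' E' a b p.
Proof.
move=> sVV' sEE' [aV [ap lp]]; split; first exact: (subsetP sVV').
by split=> //; apply: sub_path ap; apply: adjS.
Qed.

Lemma twinless_relS V V' E E' a b :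
  V \subset V' -> E \subset E' -> twinless_rel V E a b -> twinless_rel V' E' a b.
Proof.
move=> sVV' sEE' [p [q [abp baq twinfree]]].
by exists p, q; split=> //; [apply: is_dpathS abp | apply: is_dpathS baq].
Qed.

Lemma twinless_strongly_connectedS V E E' :
  E \subset E' -> twinless_strongly_connected V E -> twinless_strongly_connected V E'.
Proof.
move=> sEE' [nonempty rel_all]; split=> // a b aV bV.
exact: twinless_relS (subxx V) sEE' (rel_all a b aV bV).
Qed.

Lemma while_loop_correct V E x F F' :
  while_loop V E x F F' ->
  F \subset F' /\ twinless_strongly_connected (V :\ x) F'.
Proof.
elim=> [G tscG | G v w G' _ _ _ _ _ _ [sG' tscG']]; first by split.
by split=> //; apply: subset_trans sG'; apply: subsetUr.
Qed.

Lemma for_loop_correct V E xs F F' :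
  for_loop V E xs F F' ->
  F \subset F' /\ forall x, x \in xs -> twinless_strongly_connected (V :\ x) F'.
Proof.
elim=> [G | y ys G G1 G2 loop_y _ [sG12 tsc_ys]]; first by split.
have [sGG1 tscG1] := while_loop_correct loop_y.
split=> [|x]; first exact: subset_trans sG12.
rewrite inE => /predU1P[-> | x_ys]; last exact: tsc_ys.
exact: twinless_strongly_connectedS tscG1.
Qed.

Lemma algorithm_run_delete_vertex V E E2t x :
  algorithm_run V E E2t -> x \in V -> twinless_strongly_connected (V :\ x) E2t.
Proof.
move=> [E2v [xs [_ _ xsP run]]] xV.
have [sE2v tsc_xs] := for_loop_correct run.
have [x_xs | x_not_xs] := boolP (x \in xs); first exact: tsc_xs.
apply: twinless_strongly_connectedS sE2v _.
apply: Classical_Prop.NNPP => not_tsc; move/negP: x_not_xs; apply.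
exact/xsP.
Qed.

Lemma twinless_strongly_connected_of_delete_vertex V F :
  3 <= #|V| -> (forall x, x \in V -> twinless_strongly_connected (V :\ x) F) ->
  twinless_strongly_connected V F.
Proof.
move=> V_ge3 tsc_del.
have [a aV] : exists a, a \in V.
  by apply/set0Pn; rewrite -card_gt0; apply: leq_trans V_ge3.
split=> [|b c bV cV]; first by exists a.
have : ~~ (V \subset [set b; c]).
  apply/negP => /subset_leq_card; rewrite cards2 => V_le2.
  by move: (leq_trans V_ge3 V_le2); case: (b != c).
case/subsetPn=> x xV; rewrite !inE negb_or => /andP[xb xc].
have [_ rel_all] := tsc_del x xV.
apply: twinless_relS (subsetDl V [set x]) (subxx F) _.
by apply: rel_all; rewrite !inE 1?bV 1?cV 1?eq_sym ?xb ?xc.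
Qed.

End TwinlessConnectivity.

Theorem mainTheorem3 (T : finType) (E : {set T * T}) :
  two_vertex_twinless_connected [set: T] E ->
  forall E2t : {set T * T}, algorithm_run [set: T] E E2t ->
  two_vertex_twinless_connected [set: T] E2t.
Proof.
move=> [_ V_ge3 _] E2t run.
have tsc_del x : twinless_strongly_connected ([set: T] :\ x) E2t.
  exact: algorithm_run_delete_vertex run (in_setT x).
split=> //; first exact: twinless_strongly_connected_of_delete_vertex.
by move=> v [_ not_tsc]; apply: not_tsc.
Qed.
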